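(* Let $N\ge0$ and $j\ge1$ be integers and let $$E(N,j)=\frac{(-1)^j2}{\binom{2N+j+1}{j-1}}\sum_{i=0}^{2N}(-1)^i\Big(2^i-\binom iN\Big)\frac{2N+j-i}{i+1}\sum_{\ell=0}^i(-1)^\ell\binom{2N+j}{i-\ell}\binom{\ell+j-1}{\ell}\frac1{2N+\ell+j+2}+\frac{(-1)^{N+j}}{(N+1)\binom{2N+j+1}{j-1}}+\frac{(-1)^j(j-1)N!(N+j-1)!}{(2N+j+1)!}.$$ Then $$\frac{(-1)^{j+1}E(N,j)}{(2N+j)!}=\frac{(j-1)(2N+1)!}{(4N+j+3)!}\Big(\frac{2(2N+1)!}{N!(N+1)!}-2^{2N+2}\Big)-\frac{(2N+2)!}{(4N+j+3)!}\Big(\frac{4(2N+1)!}{N!(N+1)!}+2^{2N+3}\Big)-\frac{(j-1)(N+j-1)!N!}{(2N+j)!(2N+j+1)!}+\frac{2(j-1)(2N+2)!}{(2N+j+1)!(N+1)!}\sum_{h=N}^{2N+1}\frac{(h+j-1)!(h+1)!}{(h-N)!(2N+j+h+2)!}.$$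
   Context: Binomial coefficients $\binom mk$ with $k<0$ or $k>m\ge0$ are zero. *)

From mathcomp Require Import all_boot all_order all_algebra.
Set Implicit Arguments. Unset Strict Implicit. Unset Printing Implicit Defensive.
Import Order.TTheory GRing.Theory Num.Theory.
Local Open Scope ring_scope.

(* E(N,j) as in the paper; nat subtractions are never truncated in the
   ranges used (i <= 2N, l <= i, j >= 1). *)
Definition E (N j : nat) : rat :=
  let c : rat := ('C(2*N + j + 1, j - 1))%:R in
  (-1) ^+ j * 2 / c *
    (\sum_(0 <= i < (2*N).+1)
       (-1) ^+ i * (2 ^+ i - ('C(i, N))%:R) * ((2*N + j - i)%:R / (i.+1)%:R) *
       \sum_(0 <= l < i.+1)
          (-1) ^+ l * ('C(2*N + j, i - l))%:R * ('C(l + j - 1, l))%:R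
            / ((2*N + l + j + 2)%:R))
  + (-1) ^+ (N + j) / ((N.+1)%:R * c)
  + (-1) ^+ j * ((j - 1)%:R * (N`!)%:R * ((N + j - 1)`!)%:R) / (((2*N + j + 1)`!)%:R).

From mathcomp Require Import all_boot all_order all_algebra.
From mathcomp Require Import ring lra zify.
Import Order.TTheory GRing.Theory Num.Theory.
Local Open Scope ring_scope.

(* Both sides are brought to closed form by telescoping
   with explicit (Gosper/Zeilberger-type) certificates.
   - Left side.  The inner sum [inner] satisfies a first-order recurrence in
     i ([inner_rec], from Pascal's rule and the inverse convolution
     [alt_negbin_conv]); its solution [inner_closed] is a partial sum of
     [dterm] times a hypergeometric factor.  The outer summand is then a
     difference Phi(i+1) - Phi(i) of an explicit term ([Phi_step], resting on
     the recurrence [qcert_rec]), so Abel summation reduces the double sum to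
     Phi(2N+1) and to classical alternating binomial sums ([double_sum]).  The sum over h telescopes against an antidifference Psi
     whose polynomial part [rpoly] satisfies [rpoly_rec]; its boundary values
     are Vandermonde convolutions, one of them truncated ([tail_conv_closed]),
     which gives [rhs_sum_closed].
   Both sides then involve the same truncated convolution [trunc_conv], and
   the theorem is an identity of rational functions in a few factorials. *)

(* [field_nat] is [field] followed by the discharge of its side conditions,
   which here are always casts of naturals that must not vanish: it records
   that every natural in context is nonnegative as a rational, and tries
   linear arithmetic, positivity of factorials, or [lia] after pulling the
   cast outside the arithmetic. *)
Lemma ratr_nat_ge0 (n : nat) : 0 <= (n%:R : rat). Proof. exact: ler0n. Qed.

Ltac nat_nonneg :=
  repeat match goal with
  | n : nat |- _ => lazymatch goal with
      | H : is_true (@Order.le _ _ 0 (@GRing.natmul _ (@GRing.one _) n)) |- _ => fail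
      | _ => have := ratr_nat_ge0 n; move=> ? end end.
Ltac nat_neq0 :=
  first [ lra
        | (rewrite pnatr_eq0 -lt0n; first [apply: fact_gt0 | lia])
        | (rewrite -?natrD -?natrM pnatr_eq0; lia) ].
Ltac field_nat :=
  field; nat_nonneg; rewrite ?andbT; repeat (apply/andP; split); try nat_neq0.

Lemma natr_fact_neq0 n : (n`!)%:R != 0 :> rat.
Proof. by rewrite pnatr_eq0 -lt0n fact_gt0. Qed.

Lemma natr_factS n : ((n.+1)`!)%:R = (n.+1)%:R * (n`!)%:R :> rat.
Proof. by rewrite factS natrM. Qed.

Lemma eq_lincomb (k : rat) {A B X Y : rat} : X = Y -> A - B = k * (X - Y) -> A = B.
Proof. by move=> -> /eqP; rewrite subrr mulr0 subr_eq0 => /eqP. Qed.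

Lemma natr_binSS n m :
  ('C(n.+1, m.+1))%:R = (n.+1)%:R / (m.+1)%:R * ('C(n, m))%:R :> rat.
Proof.
have e : ((m.+1 * 'C(n.+1, m.+1))%:R = (n.+1 * 'C(n, m))%:R :> rat).
  by rewrite -(mul_bin_diag n.+1 m).
rewrite !natrM in e; apply: (eq_lincomb ((m.+1)%:R^-1) e); field_nat.
Qed.

Lemma natr_bin_succr n m :
  ('C(n, m.+1))%:R = (n%:R - m%:R) / (m.+1)%:R * ('C(n, m))%:R :> rat.
Proof.
have [le_mn | lt_nm] := leqP m n; last by rewrite !bin_small ?mulr0 //; lia.
have e : ((m.+1 * 'C(n, m.+1))%:R = ((n - m) * 'C(n, m))%:R :> rat).
  by rewrite mul_bin_left.
rewrite !natrM natrB // in e; apply: (eq_lincomb ((m.+1)%:R^-1) e); field_nat.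
Qed.

Lemma natr_bin_fact {n m} : (m <= n)%N ->
  ('C(n, m))%:R = (n`!)%:R / ((m`!)%:R * ((n - m)`!)%:R) :> rat.
Proof.
move=> le_mn; rewrite -(bin_fact le_mn) !natrM.
have := natr_fact_neq0 m; have := natr_fact_neq0 (n - m).
move: (m`!)%:R ((n - m)`!)%:R => a b ha hb; field_nat.
Qed.

Lemma mul_bin_split i s : (i * 'C(i, s) = s.+1 * 'C(i, s.+1) + s * 'C(i, s))%N.
Proof.
have := mul_bin_left i s.
by have [le_si | lt_is] := leqP s i; [nia | rewrite !bin_small //; lia].
Qed.

(* The elementary contiguity relation behind both telescoping certificates:
   for arbitrary weights a and b,
   (X+a) C(X+1,s+1) - (X+b) C(X,s+1) = (a-b+s+1) C(X,s+1) + (s+a) C(X,s). *)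
Lemma bin_contiguity X (a b : rat) s :
  (X%:R + a) * ('C(X.+1, s.+1))%:R - (X%:R + b) * ('C(X, s.+1))%:R
  = (a - b + (s.+1)%:R) * ('C(X, s.+1))%:R + (s%:R + a) * ('C(X, s))%:R.
Proof.
have e : ((X * 'C(X, s))%:R = (s.+1 * 'C(X, s.+1) + s * 'C(X, s))%:R :> rat).
  by rewrite mul_bin_split.
rewrite !natrD !natrM in e; rewrite binS natrD.
by apply: (eq_lincomb 1 e); ring.
Qed.

Lemma bin_weighted_pascal M k l :
  ((k + l + M + 3) * 'C(M, k.+1) + (k + l + 2) * 'C(M, k)
   = (M + l + 2) * 'C(M.+1, k.+1))%N.
Proof.
have [le_kM | lt_Mk] := leqP k M; last by rewrite !bin_small //; lia.
have := mul_bin_left M k; rewrite binS; nia.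
Qed.

(* Inverting (1+x)^j in (1+x)^(a+j) = (1+x)^j (1+x)^a:
   sum_l (-1)^l C(l+j-1,l) C(a+j,i-l) = C(a,i). *)
Lemma alt_negbin_conv a j i :
  \sum_(0 <= l < i.+1) (-1) ^+ l * ('C(l + j - 1, l))%:R * ('C(a + j, i - l))%:R
  = ('C(a, i))%:R :> rat.
Proof.
elim: j i => [|j IH] i.
  rewrite big_nat_recl // big1_seq ?addr0; first by rewrite expr0 mul1r bin0 mul1r addn0 subn0.
  move=> l _; rewrite (_ : (l.+1 + 0 - 1 = l)%N); last lia.
  by rewrite bin_small // mulr0 mul0r.
have negbinS l : (-1) ^+ l.+1 * ('C(l.+1 + j.+1 - 1, l.+1))%:R
    + (-1) ^+ l * ('C(l + j.+1 - 1, l))%:R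
    = (-1) ^+ l.+1 * ('C(l.+1 + j - 1, l.+1))%:R :> rat.
  rewrite (_ : (l.+1 + j.+1 - 1 = (l + j).+1)%N); last lia.
  rewrite (_ : (l + j.+1 - 1 = l + j)%N); last lia.
  rewrite (_ : (l.+1 + j - 1 = l + j)%N); last lia.
  by rewrite binS natrD exprS; ring.
case: i => [|i]; first by rewrite big_nat1 !bin0 !mul1r.
pose F (m l : nat) : rat :=
  (-1) ^+ l * ('C(l + j.+1 - 1, l))%:R * ('C(a + j, m - l))%:R.
have pascal : \sum_(0 <= l < i.+2) (-1) ^+ l * ('C(l + j.+1 - 1, l))%:R
      * ('C(a + j.+1, i.+1 - l))%:R
    = \sum_(0 <= l < i.+2) F i.+1 l + \sum_(0 <= l < i.+1) F i l.
  rewrite big_nat_recr //= [X in _ = X + _]big_nat_recr //= /F subnn !bin0.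
  rewrite addrAC -big_split /=; congr (_ + _); apply: eq_big_nat => l /andP [_ hl].
  by rewrite (_ : (i.+1 - l = (i - l).+1)%N) ?addnS ?binS ?natrD ?mulrDr //; lia.
rewrite pascal -(IH i.+1) big_nat_recl // [X in _ = X]big_nat_recl //.
rewrite -addrA -big_split /= /F !subn0; congr (_ + _); first by rewrite !bin0.
apply: eq_big_nat => l _; rewrite subSS -mulrDl.
by congr (_ * _); rewrite negbinS.
Qed.

Lemma alt_sum_pascal n (f : nat -> rat) :
  \sum_(0 <= k < n.+2) (-1) ^+ k * ('C(n.+1, k))%:R * f k
  = \sum_(0 <= k < n.+1) (-1) ^+ k * ('C(n, k))%:R * (f k - f k.+1).
Proof.
pose g k := (-1) ^+ k * ('C(n, k))%:R * f k.
have drop_last : \sum_(0 <= k < n.+2) g k = \sum_(0 <= k < n.+1) g k.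
  by rewrite big_nat_recr //= /g bin_small // mulr0 mul0r addr0.
rewrite big_nat_recl //.
rewrite (eq_big_nat _ _ (F2 := fun k => g k.+1 - (-1) ^+ k * ('C(n, k))%:R * f k.+1));
  last by move=> k _; rewrite /g binS natrD exprS; ring.
rewrite sumrB addrA (_ : (-1) ^+ 0 * ('C(n.+1, 0))%:R * f 0%N = g 0%N); last by rewrite /g !bin0.
rewrite -big_nat_recl // drop_last /g -sumrB.
by apply: eq_big_nat => k _; ring.
Qed.

Lemma alt_sum_bin_shift n a b : (n <= b)%N ->
  \sum_(0 <= k < n.+1) (-1) ^+ k * ('C(n, k))%:R * ('C(k + a, b))%:R
  = (-1) ^+ n * ('C(a, b - n))%:R :> rat.
Proof.
elim: n a b => [|n IH] a b hb.
  by rewrite big_nat1 expr0 bin0 !mul1r add0n subn0.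
case: b hb => [|b] hb //.
rewrite (alt_sum_pascal n (fun k => ('C(k + a, b.+1))%:R)).
rewrite (eq_big_nat _ _ (F2 := fun k => - ((-1) ^+ k * ('C(n, k))%:R * ('C(k + a, b))%:R)));
  last by move=> k _; rewrite addSn binS natrD; ring.
by rewrite sumrN IH // exprS subSS; ring.
Qed.

Lemma alt_sum_bin_orth m s :
  \sum_(0 <= i < m.+1) (-1) ^+ i * ('C(m, i))%:R * ('C(i, s))%:R
  = if m == s then (-1) ^+ m else 0 :> rat.
Proof.
elim: m s => [|m IH] [|s].
- by rewrite big_nat1.
- by rewrite big_nat1.
- rewrite (alt_sum_pascal m (fun i => ('C(i, 0))%:R)) big1_seq // => k _.
  by rewrite !bin0 subrr mulr0.
rewrite (alt_sum_pascal m (fun i => ('C(i, s.+1))%:R)).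
rewrite (eq_big_nat _ _ (F2 := fun k => - ((-1) ^+ k * ('C(m, k))%:R * ('C(k, s))%:R)));
  last by move=> k _; rewrite binS natrD; ring.
by rewrite sumrN IH eqSS; case: (m == s); rewrite ?oppr0 // exprS; ring.
Qed.

Lemma alt_sum_binS n s : (s <= n)%N ->
  \sum_(0 <= i < n.+1) (-1) ^+ i * ('C(n.+1, i.+1))%:R * ('C(i, s))%:R = (-1) ^+ s :> rat.
Proof.
elim: n => [|n IH] hs; first by case: s hs => // _; rewrite big_nat1.
rewrite (eq_big_nat _ _ (F2 := fun i => (-1) ^+ i * ('C(n.+1, i.+1))%:R * ('C(i, s))%:R
   + (-1) ^+ i * ('C(n.+1, i))%:R * ('C(i, s))%:R)); last by move=> i _; rewrite binS natrD; ring.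
rewrite big_split /= alt_sum_bin_orth big_nat_recr //= bin_small // mulr0 mul0r addr0.
have [le_sn | lt_ns] := leqP s n.
  by rewrite IH // (_ : (n.+1 == s) = false) ?addr0 //; apply/eqP; lia.
have -> : s = n.+1 by lia.
rewrite eqxx big1_seq ?add0r // => i /andP [_]; rewrite mem_index_iota => /andP [_ hi].
by rewrite (bin_small hi) mulr0.
Qed.

Lemma alt_sum_bin_div_succ n s : (s <= n)%N ->
  \sum_(0 <= i < n.+1) (-1) ^+ i * ('C(n, i))%:R * ('C(i, s))%:R / (i.+1)%:R
  = (-1) ^+ s / (n.+1)%:R :> rat.
Proof.
move=> hs; rewrite -(alt_sum_binS n s hs) mulr_suml.
apply: eq_big_nat => i _; rewrite natr_binSS; field_nat.
Qed.

Lemma alt_partial_sum_bin a m :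
  \sum_(0 <= s < m.+1) (-1) ^+ s * ('C(a.+1, s))%:R = (-1) ^+ m * ('C(a, m))%:R :> rat.
Proof.
elim: m => [|m IH]; first by rewrite big_nat1 !bin0.
by rewrite big_nat_recr //= IH binS natrD exprS; ring.
Qed.

(* For odd n, sum_i (-1)^i C(n,i) 2^i / (i+1) = ((1-2)^(n+1) - 1) / (-2(n+1)) = 0. *)
Lemma alt_sum_pow2_div_succ n : odd n ->
  \sum_(0 <= i < n.+1) (-1) ^+ i * ('C(n, i))%:R * 2 ^+ i / (i.+1)%:R = 0 :> rat.
Proof.
move=> odd_n.
have binomial_thm : \sum_(0 <= i < n.+2) (-2 : rat) ^+ i *+ 'C(n.+1, i) = 1.
  rewrite big_mkord -exprD1n (_ : -2 + 1 = -1 :> rat) //.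
  by rewrite -signr_odd /= odd_n.
rewrite big_nat_recl // expr0 bin0 mulr1n -[RHS]addr0 in binomial_thm.
move/addrI: binomial_thm => tail0.
rewrite (eq_big_nat _ _ (F2 := fun i =>
  - (2 * (n.+1)%:R)^-1 * ((-2 : rat) ^+ i.+1 *+ 'C(n.+1, i.+1)))).
  by rewrite -mulr_sumr tail0 mulr0.
move=> i _; rewrite -[(-2) ^+ i.+1 *+ _]mulr_natr natr_binSS exprS.
rewrite (_ : (-2 : rat) ^+ i = (-1) ^+ i * 2 ^+ i); last by rewrite -exprMn mulN1r.
field_nat.
Qed.

Lemma abel_summation (f d : nat -> rat) m :
  \sum_(0 <= i < m) (f i.+1 - f i) * \sum_(0 <= k < i.+1) d k
  = f m * \sum_(0 <= k < m) d k - \sum_(0 <= i < m) f i * d i.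
Proof.
elim: m => [|m IH]; first by rewrite !big_geq // mulr0 subrr.
by rewrite !big_nat_recr //= IH; ring.
Qed.

Definition inner (N j i : nat) : rat :=
  \sum_(0 <= l < i.+1)
    (-1) ^+ l * ('C(2*N + j, i - l))%:R * ('C(l + j - 1, l))%:R / ((2*N + l + j + 2)%:R).

(* A first-order recurrence in i for the inner sum, obtained from the weighted
   Pascal rule and the inverse convolution [alt_negbin_conv] with a = 2N+1. *)
Lemma inner_rec N j i :
  (i + 2*N + j + 3)%:R * inner N j i.+1 + (i.+2)%:R * inner N j i = ('C(2*N + 1, i.+1))%:R.
Proof.
rewrite /inner big_nat_recr //= mulrDr addrAC !big_distrr -big_split /=.
rewrite -(alt_negbin_conv (2*N + 1) j i.+1) (big_nat_recr i.+1) //=.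
congr (_ + _); last first.
  rewrite subnn !bin0 (_ : (2*N + i.+1 + j + 2 = i + 2*N + j + 3)%N); last lia.
  by field_nat.
apply: eq_big_nat => l /andP [_ hl].
have [k ->] : exists k, i = (k + l)%N by exists (i - l)%N; lia.
rewrite (_ : ((k + l).+1 - l = k.+1)%N); last lia.
rewrite (_ : (k + l - l = k)%N); last lia.
rewrite (_ : (2*N + 1 + j = (2*N + j).+1)%N); last lia.
have pascal : ('C((2*N + j).+1, k.+1))%:R
    = ((k + l + (2*N + j) + 3)%:R * ('C(2*N + j, k.+1))%:R
       + (k + l + 2)%:R * ('C(2*N + j, k))%:R) / (2*N + j + l + 2)%:R :> rat.
  by rewrite -!natrM -natrD bin_weighted_pascal natrM; field_nat.
rewrite pascal (_ : ((k + l).+2 = k + l + 2)%N); last lia.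
rewrite (_ : (2*N + l + j + 2 = 2*N + j + l + 2)%N); last lia.
rewrite (_ : (k + l + 2*N + j + 3 = k + l + (2*N + j) + 3)%N); last lia.
by field_nat.
Qed.

(* The summand of the partial sums solving [inner_rec]. *)
Definition dterm (N j k : nat) : rat :=
  (-1) ^+ k * ('C(2*N + 1, k))%:R * ((k + 2*N + j + 1)`!)%:R / ((k.+1)`!)%:R.

Lemma inner_closed N j i :
  inner N j i = (-1) ^+ i * ((i.+1)`!)%:R / ((i + 2*N + j + 2)`!)%:R
                * \sum_(0 <= k < i.+1) dterm N j k.
Proof.
elim: i => [|i IH].
  rewrite /inner !big_nat1 /dterm !expr0 !bin0 !mul1r !add0n.
  rewrite (_ : (2*N + j + 2 = (2*N + j + 1).+1)%N); last lia.
  rewrite (_ : (2*N + 0 + j + 2 = (2*N + j + 1).+1)%N); last lia.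
  rewrite natr_factS (natr_factS 0) fact0.
  have := natr_fact_neq0 (2*N + j + 1); move: (2*N + j + 1)%N => m hm; field_nat.
have step : inner N j i.+1
    = (('C(2*N + 1, i.+1))%:R - (i.+2)%:R * inner N j i) / (i + 2*N + j + 3)%:R.
  by rewrite -(inner_rec N j i); field_nat.
rewrite step IH (big_nat_recr i.+1) //= /dterm.
rewrite (_ : (i.+1 + 2*N + j + 1 = i + 2*N + j + 2)%N); last lia.
rewrite (_ : (i.+1 + 2*N + j + 2 = (i + 2*N + j + 2).+1)%N); last lia.
rewrite (natr_factS (i + 2*N + j + 2)) (natr_factS i.+1).
rewrite (_ : (i + 2*N + j + 2).+1 = i + 2*N + j + 3)%N; last lia.
have := natr_fact_neq0 (i + 2*N + j + 2); have := natr_fact_neq0 i.+1.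
move: (\sum_(0 <= k < i.+1) _) => Q.
rewrite -[(-1) ^+ i.+1]signr_odd -[(-1) ^+ i]signr_odd /=.
by case: (odd i) => /= h1 h2; rewrite ?expr0 ?expr1; field_nat.
Qed.

(* The full sum of the dterm's is an alternating binomial sum of [alt_sum_bin_shift]. *)
Lemma sum_dterm N j : (1 <= j)%N ->
  \sum_(0 <= k < (2*N + 1).+1) dterm N j k
  = - ((2*N + j)`!)%:R * ('C(2*N + j + 1, j - 1))%:R.
Proof.
move=> hj.
rewrite (eq_big_nat _ _ (F2 := fun k => ((2*N + j)`!)%:R *
   ((-1) ^+ k * ('C(2*N + 1, k))%:R * ('C(k + (2*N + j + 1), 2*N + j))%:R))); last first.
  move=> k _; rewrite /dterm.
  rewrite (_ : (k + 2*N + j + 1 = k.+1 + (2*N + j))%N); last lia.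
  rewrite (_ : (k + (2*N + j + 1) = k.+1 + (2*N + j))%N); last lia.
  rewrite (natr_bin_fact (leq_addl k.+1 (2*N + j))).
  rewrite (_ : (k.+1 + (2*N + j) - (2*N + j) = k.+1)%N); last lia.
  have := natr_fact_neq0 (2*N + j); have := natr_fact_neq0 k.+1.
  move: ((2*N + j)`!)%:R ((k.+1)`!)%:R => a b ha hb; field_nat.
rewrite -big_distrr /= alt_sum_bin_shift; last lia.
rewrite (_ : (2*N + j - (2*N + 1) = j - 1)%N); last lia.
rewrite (_ : (-1) ^+ (2*N + 1) = -1 :> rat); first ring.
by rewrite -signr_odd oddD oddM /= ?andbF ?addbT ?addbF /= ?expr1.
Qed.

(* The rational part of the antidifference Phi below, a polynomial in k of
   degree N+1. *)
Definition qcert (N j k : nat) : rat :=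
  (N.+1)%:R / (N + j)%:R * ('C(k, N.+1))%:R
  - (j%:R - 1) / ((N + j)%:R * ('C(2*N + j, N))%:R) *
    \sum_(0 <= s < N.+1) ('C(2*N + j + 1, s))%:R * ('C(k, s))%:R.

(* The binomial polynomial part of qcert satisfies a telescoping recurrence:
   its terms C(M+1,s)((i+1)C(i+1,s) - (i+M+2)C(i,s)) are differences of
   g s = s C(M+1,s) C(i,s-1). *)
Lemma bin_poly_rec M i m :
  \sum_(0 <= s < m.+1) ('C(M + 1, s))%:R *
     ((i.+1)%:R * ('C(i.+1, s))%:R - (i + M + 2)%:R * ('C(i, s))%:R)
  = - ((m.+1)%:R * ('C(M + 1, m.+1))%:R * ('C(i, m))%:R) :> rat.
Proof.
pose g s : rat := s%:R * ('C(M + 1, s))%:R * ('C(i, s.-1))%:R.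
rewrite (eq_big_nat _ _ (F2 := fun s => - (g s.+1 - g s))); last first.
  move=> [|s] _; rewrite /g.
    by rewrite !bin0 bin1 !mul0r subr0; field_nat.
  have := bin_contiguity i 1 (M + 2)%:R s.
  rewrite (_ : i%:R + 1 = (i.+1)%:R :> rat); last by rewrite -addn1 natrD.
  rewrite (_ : i%:R + (M + 2)%:R = (i + M + 2)%:R :> rat); last by rewrite -natrD addnA.
  move=> ->; rewrite !succnK (natr_bin_succr (M + 1) s.+1); field_nat.
by rewrite sumrN telescope_sumr // /g succnK !mul0r subr0.
Qed.

(* The recurrence satisfied by qcert; it is what makes Phi an antidifference. *)
Lemma qcert_rec N j i : (1 <= j)%N ->
  (i.+1)%:R * qcert N j i.+1 - (i + (2*N + j) + 2)%:R * qcert N j i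
  = ('C(i, N))%:R * ((2*N + j)%:R - i%:R).
Proof.
move=> hj; set M := (2*N + j)%N.
pose S k : rat := \sum_(0 <= s < N.+1) ('C(M + 1, s))%:R * ('C(k, s))%:R.
set a : rat := (N.+1)%:R / (N + j)%:R; set b : rat := (j%:R - 1) / ((N + j)%:R * ('C(M, N))%:R).
have qcertE k : qcert N j k = a * ('C(k, N.+1))%:R - b * S k by [].
have S_rec : (i.+1)%:R * S i.+1 - (i + M + 2)%:R * S i
    = - ((N.+1)%:R * ('C(M + 1, N.+1))%:R * ('C(i, N))%:R).
  by rewrite -bin_poly_rec !mulr_sumr -sumrB; apply: eq_big_nat => s _; ring.
have top := bin_contiguity i 1 (M + 2)%:R N.
rewrite (_ : i%:R + 1 = (i.+1)%:R :> rat) in top; last by rewrite -addn1 natrD.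
rewrite (_ : i%:R + (M + 2)%:R = (i + M + 2)%:R :> rat) in top; last by rewrite -natrD addnA.
rewrite !qcertE.
have -> : forall c x1 x0 y1 y0 : rat, (i.+1)%:R * (a * x1 - b * y1) - c * (a * x0 - b * y0)
    = a * ((i.+1)%:R * x1 - c * x0) - b * ((i.+1)%:R * y1 - c * y0) by move=> *; ring.
rewrite top S_rec natr_bin_succr addn1 natr_binSS /a /b /M.
have : ('C(2*N + j, N))%:R != 0 :> rat by rewrite pnatr_eq0 -lt0n bin_gt0; lia.
move: ('C(2*N + j, N))%:R ('C(i, N))%:R => c d hc.
field_nat.
Qed.

(* The antidifference (in i) of the outer summand of E, up to the factor
   coming from [inner_closed]. *)
Definition Phi (N j k : nat) : rat :=
  - (2 ^+ k + qcert N j k) * (k`!)%:R / ((k + 2*N + j + 1)`!)%:R.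

Lemma Phi_step N j i : (1 <= j)%N ->
  Phi N j i.+1 - Phi N j i
  = (2 ^+ i - ('C(i, N))%:R) * ((2*N + j)%:R - i%:R) * (i`!)%:R / ((i + 2*N + j + 2)`!)%:R.
Proof.
move=> hj.
have step : qcert N j i.+1 = (('C(i, N))%:R * ((2*N + j)%:R - i%:R)
    + (i + (2*N + j) + 2)%:R * qcert N j i) / (i.+1)%:R.
  by rewrite -(qcert_rec N j i hj); field_nat.
rewrite /Phi step.
rewrite (_ : (i.+1 + 2*N + j + 1 = i + 2*N + j + 2)%N); last lia.
rewrite (_ : (i + 2*N + j + 2 = (i + 2*N + j + 1).+1)%N); last lia.
rewrite (natr_factS (i + 2*N + j + 1)) (natr_factS i).
have := natr_fact_neq0 (i + 2*N + j + 1); have := natr_fact_neq0 i.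
move: (qcert N j i) ((i + 2*N + j + 1)`!)%:R (i`!)%:R ('C(i, N))%:R => q a b c ha hb.
by rewrite exprS; field_nat.
Qed.

Lemma outer_term N j i : (1 <= j)%N -> (i <= 2*N)%N ->
  (-1) ^+ i * (2 ^+ i - ('C(i, N))%:R) * ((2*N + j - i)%:R / (i.+1)%:R) * inner N j i
  = (Phi N j i.+1 - Phi N j i) * \sum_(0 <= k < i.+1) dterm N j k.
Proof.
move=> hj hi.
rewrite inner_closed Phi_step // natrB; last lia.
rewrite natr_factS.
have := natr_fact_neq0 (i + 2*N + j + 2); have := natr_fact_neq0 i.
move: (\sum_(0 <= k < i.+1) dterm N j k) ((i + 2*N + j + 2)`!)%:R (i`!)%:R => Q a b ha hb.
by rewrite -signr_odd; case: (odd i); rewrite /= ?expr0 ?expr1; field_nat.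
Qed.

(* The alternating binomial transform of qcert, evaluated termwise by
   [alt_sum_bin_div_succ] and [alt_partial_sum_bin]. *)
Lemma alt_sum_qcert N j : (1 <= j)%N ->
  \sum_(0 <= i < (2*N + 1).+1) (-1) ^+ i * ('C(2*N + 1, i))%:R * qcert N j i / (i.+1)%:R
  = (-1) ^+ N.+1 / (2*N + 2)%:R.
Proof.
move=> hj; pose c : rat := (N.+1)%:R / (N + j)%:R.
pose d : rat := (j%:R - 1) / ((N + j)%:R * ('C(2*N + j, N))%:R).
pose A i : rat := (-1) ^+ i * ('C(2*N + 1, i))%:R / (i.+1)%:R.
rewrite (eq_big_nat _ _ (F2 := fun i => c * (A i * ('C(i, N.+1))%:R)
   - d * \sum_(0 <= s < N.+1) ('C(2*N + j + 1, s))%:R * (A i * ('C(i, s))%:R))); last first.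
  move=> i _; under [in RHS]eq_bigr => s _ do rewrite mulrCA.
  by rewrite -mulr_sumr /qcert -/c -/d /A; ring.
have transform s : (s <= 2*N + 1)%N ->
    \sum_(0 <= i < (2*N + 1).+1) A i * ('C(i, s))%:R = (-1) ^+ s / (2*N + 1).+1%:R.
  move=> hs; rewrite -alt_sum_bin_div_succ //.
  by apply: eq_big_nat => i _; rewrite /A; field_nat.
rewrite sumrB -!mulr_sumr transform; last lia.
rewrite exchange_big_nat /=.
rewrite (eq_big_nat _ _ (F2 := fun s => ('C(2*N + j + 1, s))%:R * ((-1) ^+ s / (2*N + 1).+1%:R)));
  last by move=> s /andP [_ hs]; rewrite -mulr_sumr transform //; lia.
have partial : \sum_(0 <= s < N.+1) ('C(2*N + j + 1, s))%:R * ((-1) ^+ s / (2*N + 1).+1%:R)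
    = (-1) ^+ N * ('C(2*N + j, N))%:R / (2*N + 1).+1%:R :> rat.
  rewrite -(alt_partial_sum_bin (2*N + j) N) mulr_suml.
  by apply: eq_big_nat => s _; rewrite addn1; ring.
rewrite partial /c /d.
have : ('C(2*N + j, N))%:R != 0 :> rat by rewrite pnatr_eq0 -lt0n bin_gt0; lia.
move: ('C(2*N + j, N))%:R => C hC.
rewrite exprS (_ : (2*N + 2 = (2*N + 1).+1)%N); last lia.
by rewrite -signr_odd; case: (odd N); rewrite /= ?expr0 ?expr1; field_nat.
Qed.

(* Abel summation of the double sum of E against the antidifference Phi: only
   the boundary term at 2N+1 and the alternating transforms of
   [alt_sum_pow2_div_succ] (2^i part, vanishing) and [alt_sum_qcert] survive. *)
Lemma double_sum N j : (1 <= j)%N ->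
  \sum_(0 <= i < (2*N).+1)
     (-1) ^+ i * (2 ^+ i - ('C(i, N))%:R) * ((2*N + j - i)%:R / (i.+1)%:R) * inner N j i
  = - ((2*N + j)`!)%:R * ('C(2*N + j + 1, j - 1))%:R * Phi N j (2*N + 1)
    + (-1) ^+ N.+1 / (2*N + 2)%:R.
Proof.
move=> hj.
rewrite (eq_big_nat _ _ (F2 := fun i => (Phi N j i.+1 - Phi N j i)
   * \sum_(0 <= k < i.+1) dterm N j k)); last by move=> i /andP [_ hi]; rewrite outer_term.
rewrite abel_summation (_ : (2*N).+1 = 2*N + 1)%N; last lia.
have drop_top (F : nat -> rat) :
    \sum_(0 <= k < 2*N + 1) F k = \sum_(0 <= k < (2*N + 1).+1) F k - F (2*N + 1)%N.
  by rewrite big_nat_recr //= addrK.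
rewrite !drop_top sum_dterm //.
have by_parts : \sum_(0 <= k < (2*N + 1).+1) Phi N j k * dterm N j k
    = - (\sum_(0 <= i < (2*N + 1).+1) (-1) ^+ i * ('C(2*N + 1, i))%:R * 2 ^+ i / (i.+1)%:R
       + \sum_(0 <= i < (2*N + 1).+1) (-1) ^+ i * ('C(2*N + 1, i))%:R * qcert N j i / (i.+1)%:R).
  rewrite -big_split -sumrN; apply: eq_big_nat => i _ /=.
  rewrite /Phi /dterm natr_factS.
  have := natr_fact_neq0 (i + 2*N + j + 1); have := natr_fact_neq0 i.
  move: (qcert N j i) ((i + 2*N + j + 1)`!)%:R (i`!)%:R => q a b ha hb; field_nat.
rewrite by_parts alt_sum_pow2_div_succ; last by rewrite oddD oddM /= ?andbF ?addbT.
by rewrite alt_sum_qcert //; ring.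
Qed.

Lemma E_reduced N j : (1 <= j)%N ->
  (-1) ^+ j.+1 * E N j / ((2*N + j)`!)%:R
  = 2 * Phi N j (2*N + 1) - (j - 1)%:R * ((N + j - 1)`!)%:R * (N`!)%:R
      / (((2*N + j)`!)%:R * ((2*N + j + 1)`!)%:R).
Proof.
move=> hj; rewrite /E; have := double_sum N j hj; rewrite /inner => ->.
rewrite (_ : (2*N + j + 1 = (2*N + j).+1)%N); last lia.
rewrite natr_factS exprD exprS [(-1) ^+ N.+1]exprS (_ : (2*N + 2 = 2 * N.+1)%N); last lia.
have : ('C((2*N + j).+1, j - 1))%:R != 0 :> rat by rewrite pnatr_eq0 -lt0n bin_gt0; lia.
have := natr_fact_neq0 (2*N + j).
move: ('C((2*N + j).+1, j - 1))%:R ((2*N + j)`!)%:R (Phi N j (2*N + 1)) => c f p hf hc.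
rewrite -[(-1) ^+ j]signr_odd -[(-1) ^+ N]signr_odd.
by case: (odd j); case: (odd N); rewrite /= ?expr0 ?expr1; field_nat.
Qed.

(* The truncated convolution sum_{s<=N} C(2N+j+1,s) C(2N+1,s); it appears in
   both Phi(2N+1) and the boundary value of the right-hand telescoping. *)
Definition trunc_conv (N j : nat) : rat :=
  \sum_(0 <= s < N.+1) ('C(2*N + j + 1, s))%:R * ('C(2*N + 1, s))%:R.

Lemma Phi_top N j : (1 <= j)%N ->
  Phi N j (2*N + 1)
  = - (2 ^+ (2*N + 1) + ((2*N + 1)`!)%:R / ((N`!)%:R ^+ 2 * (N + j)%:R)
       - (j%:R - 1) * (N`!)%:R * ((N + j - 1)`!)%:R / ((2*N + j)`!)%:R * trunc_conv N j)
    * ((2*N + 1)`!)%:R / ((4*N + j + 2)`!)%:R.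
Proof.
move=> hj; rewrite /Phi /qcert -/(trunc_conv N j).
rewrite (natr_bin_fact (_ : (N.+1 <= 2*N + 1)%N)); last lia.
rewrite (natr_bin_fact (_ : (N <= 2*N + j)%N)); last lia.
rewrite (_ : (2*N + 1 - N.+1 = N)%N); last lia.
rewrite (_ : (2*N + j - N = (N + j - 1).+1)%N); last lia.
rewrite (_ : (2*N + 1 + 2*N + j + 1 = 4*N + j + 2)%N); last lia.
rewrite !natr_factS (_ : (N + j - 1).+1 = N + j)%N; last lia.
have := natr_fact_neq0 N; have := natr_fact_neq0 (2*N + j); have := natr_fact_neq0 (N + j - 1).
move: (N`!)%:R ((2*N + j)`!)%:R ((N + j - 1)`!)%:R => a b c ha hb hc; field_nat.
Qed.

(* Coefficients, in the binomial basis C(h+1,s), of the polynomial part of the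
   antidifference Psi of the sum over h. *)
Definition rcoef (N j s : nat) : rat :=
  - (N`!)%:R * ('C(2*N + j, 2*N + 2 - s))%:R / ('C(2*N + j, N.+1))%:R.

Definition rpoly (N j h : nat) : rat :=
  \sum_(0 <= s < N.+2) rcoef N j s * ('C(h.+1, s))%:R.

Lemma rcoef_rec N j s : (1 <= j)%N -> (s <= N.+1)%N ->
  rcoef N j s * ((2*N + 2)%:R - s%:R) = rcoef N j s.+1 * (s%:R + j%:R - 1).
Proof.
move=> hj hs; rewrite /rcoef (_ : (2*N + 2 - s.+1 = 2*N + 1 - s)%N); last lia.
have e := mul_bin_left (2*N + j) (2*N + 1 - s).
rewrite (_ : (2*N + 1 - s).+1 = 2*N + 2 - s)%N in e; last lia.
rewrite (_ : (2*N + j - (2*N + 1 - s) = s + j - 1)%N) in e; last lia.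
move/(congr1 (fun n : nat => n%:R : rat)): e; rewrite !natrM !natrB ?natrD; try lia.
have : ('C(2*N + j, N.+1))%:R != 0 :> rat by rewrite pnatr_eq0 -lt0n bin_gt0; lia.
move: ('C(2*N + j, N.+1))%:R ('C(2*N + j, 2*N + 2 - s))%:R ('C(2*N + j, 2*N + 1 - s))%:R
  => c x y hc e.
by apply: (eq_lincomb (- (N`!)%:R / c) e); field_nat.
Qed.

(* The recurrence making Psi an antidifference of the summand over h. *)
Lemma rpoly_rec N j h : (1 <= j)%N ->
  rpoly N j h.+1 * (h + j)%:R - rpoly N j h * (h + j + 2*N + 2)%:R
  = ((N.+1)`!)%:R * ('C(h.+1, N.+1))%:R.
Proof.
move=> hj.
pose U t := rcoef N j t.+1 * (t%:R + j%:R - 1) * ('C(h.+1, t))%:R.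
pose V s := if s is t.+1 then U t else 0.
have telescope : rpoly N j h.+1 * (h + j)%:R - rpoly N j h * (h + j + 2*N + 2)%:R
    = \sum_(0 <= s < N.+2) - (V s.+1 - V s).
  rewrite /rpoly !mulr_suml -sumrB; apply: eq_big_nat => -[_|t /andP [_ ht]].
    have r := rcoef_rec N j 0 hj (leq0n _).
    rewrite /V /U !bin0 !mulr1 subr0 in r *.
    by rewrite -r; field_nat.
  have r := rcoef_rec N j t.+1 hj ht.
  have p := bin_contiguity h.+1 (j%:R - 1) ((2*N + j + 1)%:R) t.
  rewrite /V /U.
  rewrite (_ : (h + j)%:R = (h.+1)%:R + (j%:R - 1) :> rat); last by rewrite !natrD; ring.
  rewrite (_ : (h + j + 2*N + 2)%:R = (h.+1)%:R + (2*N + j + 1)%:R :> rat);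
    last by rewrite !natrD; ring.
  rewrite (_ : forall b u v x y : rat, b * x * u - b * y * v = b * (u * x - v * y));
    last by move=> *; ring.
  by rewrite p; apply: (eq_lincomb (- ('C(h.+1, t.+1))%:R) r); ring.
rewrite telescope sumrN telescope_sumr // /V /U /rcoef.
rewrite (_ : (2*N + 2 - N.+2 = N)%N); last lia.
rewrite (natr_bin_succr (2*N + j) N) natr_factS -natrB; last lia.
rewrite (_ : (2*N + j - N = N + j)%N); last lia.
have : ('C(2*N + j, N))%:R != 0 :> rat by rewrite pnatr_eq0 -lt0n bin_gt0; lia.
move: ('C(2*N + j, N))%:R ('C(h.+1, N.+1))%:R (N`!)%:R => d x f hd.
field_nat.
Qed.

Definition Psi (N j h : nat) : rat :=
  rpoly N j h * ((h + j - 1)`!)%:R / ((h + j + 2*N + 1)`!)%:R.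

Lemma h_sum_telescopes N j : (1 <= j)%N ->
  \sum_(N <= h < (2*N + 1).+1)
     ((h + j - 1)`!)%:R * ((h.+1)`!)%:R / (((h - N)`!)%:R * ((2*N + j + h + 2)`!)%:R)
  = Psi N j (2*N + 2) - Psi N j N.
Proof.
move=> hj.
rewrite (eq_big_nat _ _ (F2 := fun h => Psi N j h.+1 - Psi N j h)); last first.
  move=> h /andP [hN _].
  have step : rpoly N j h.+1 = (((N.+1)`!)%:R * ('C(h.+1, N.+1))%:R
      + rpoly N j h * (h + j + 2*N + 2)%:R) / (h + j)%:R.
    by rewrite -(rpoly_rec N j h hj); field_nat.
  rewrite /Psi step (natr_bin_fact (_ : (N.+1 <= h.+1)%N)) // subSS.
  rewrite (_ : (h.+1 + j - 1 = (h + j - 1).+1)%N); last lia.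
  rewrite (_ : (h.+1 + j + 2*N + 1 = (h + j + 2*N + 1).+1)%N); last lia.
  rewrite (_ : (2*N + j + h + 2 = (h + j + 2*N + 1).+1)%N); last lia.
  rewrite !natr_factS (_ : ((h + j - 1).+1 = h + j)%N); last lia.
  have := natr_fact_neq0 (h + j - 1); have := natr_fact_neq0 (h + j + 2*N + 1).
  have := natr_fact_neq0 (h - N); have := natr_fact_neq0 N; have := natr_fact_neq0 h.
  move: (rpoly N j h) ((h + j - 1)`!)%:R ((h + j + 2*N + 1)`!)%:R ((h - N)`!)%:R
    (N`!)%:R (h`!)%:R => p a b c d e he hd hc hb ha.
  field_nat.
by rewrite telescope_sumr; [congr (Psi N j _ - _); lia | lia].
Qed.

(* The upper half of the Vandermonde convolution C(4N+j+3,2N+2). *)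
Definition tail_conv (N j : nat) : rat :=
  \sum_(0 <= s < N.+2) ('C(2*N + j, 2*N + 2 - s))%:R * ('C(2*N + 3, s))%:R.

Lemma rpoly_top N j :
  rpoly N j (2*N + 2) = - (N`!)%:R / ('C(2*N + j, N.+1))%:R * tail_conv N j.
Proof.
rewrite /rpoly /tail_conv mulr_sumr; apply: eq_bigr => s _.
by rewrite /rcoef (_ : ((2*N + 2).+1 = 2*N + 3)%N); [ring | lia].
Qed.

(* At h = N the polynomial is a full Vandermonde convolution. *)
Lemma rpoly_bottom N j :
  rpoly N j N = - (N`!)%:R / ('C(2*N + j, N.+1))%:R * ('C(N.+1 + (2*N + j), 2*N + 2))%:R.
Proof.
have V := binomial.Vandermonde N.+1 (2*N + j) (2*N + 2).
rewrite -(big_mkord xpredT (fun s => 'C(N.+1, s) * 'C(2*N + j, 2*N + 2 - s))) in V.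
rewrite -V natr_sum (big_cat_nat (n := N.+2)) //=; last lia.
rewrite [X in _ = _ * (_ + X)]big1_seq ?addr0; last first.
  by move=> s; rewrite mem_index_iota => /andP [_ /andP [hs _]]; rewrite bin_small ?mul0n.
rewrite /rpoly mulr_sumr; apply: eq_bigr => s _.
by rewrite /rcoef natrM; ring.
Qed.

(* Splitting the Vandermonde convolution C(4N+j+3,2N+2) at N+1, the lower half
   being reindexed by s -> 2N+2-s. *)
Lemma vandermonde_split N j :
  tail_conv N j + \sum_(0 <= r < N.+1) ('C(2*N + j, r))%:R * ('C(2*N + 3, r.+1))%:R
  = ('C(2*N + 3 + (2*N + j), 2*N + 2))%:R :> rat.
Proof.
have V := binomial.Vandermonde (2*N + 3) (2*N + j) (2*N + 2).
rewrite -(big_mkord xpredT (fun s => 'C(2*N + 3, s) * 'C(2*N + j, 2*N + 2 - s))) in V.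
rewrite -V natr_sum [in RHS](big_cat_nat (n := N.+2)) //=; last lia.
rewrite /tail_conv; congr (_ + _).
  by apply: eq_bigr => s _; rewrite natrM mulrC.
rewrite big_nat_rev /= -{1}(add0n N.+2) big_addn.
rewrite (_ : ((2*N + 2).+1 - N.+2 = N.+1)%N); last lia.
apply: eq_big_nat => i /andP [_ hi].
rewrite (_ : (0 + N.+1 - i.+1 = N - i)%N); last lia.
rewrite (_ : (2*N + 2 - (i + N.+2) = N - i)%N); last lia.
rewrite -(bin_sub (_ : (i + N.+2 <= 2*N + 3)%N)); last lia.
rewrite (_ : (2*N + 3 - (i + N.+2) = (N - i).+1)%N); last lia.
by rewrite natrM mulrC.
Qed.

Lemma conv_partial_sums N j m : (1 <= j)%N -> (m <= N)%N ->
  \sum_(0 <= r < m.+1) ((4*N + j + 3)%:R * ('C(2*N + j + 1, r))%:R * ('C(2*N + 1, r))%:R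
     - (2*N + 2)%:R * ('C(2*N + j, r))%:R * ('C(2*N + 3, r.+1))%:R)
  = ((2*N + j + 1)%:R - (2*N + 2)%:R ^+ 2 / (m.+1)%:R)
    * ('C(2*N + 1, m))%:R * ('C(2*N + j, m))%:R :> rat.
Proof.
move=> hj; elim: m => [|m IH] hm.
  by rewrite big_nat1 !bin0 bin1; field_nat.
rewrite big_nat_recr //= IH; last lia.
rewrite (_ : (2*N + j + 1 = (2*N + j).+1)%N); last lia.
rewrite (_ : (2*N + 3 = (2*N + 1).+2)%N); last lia.
rewrite !natr_binSS !(natr_bin_succr _ m).
have : (2*N + j)%:R - m%:R != 0 :> rat by rewrite -natrB ?pnatr_eq0; lia.
move: ('C(2*N + 1, m))%:R ('C(2*N + j, m))%:R => x y hM.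
by field_nat.
Qed.

Lemma tail_conv_closed N j : (1 <= j)%N ->
  (2*N + 2)%:R * tail_conv N j
  = (2*N + 2)%:R * ('C(2*N + 3 + (2*N + j), 2*N + 2))%:R
    + (j%:R - (2*N + 3)%:R) * ('C(2*N + 1, N))%:R * ('C(2*N + j, N))%:R
    - (4*N + j + 3)%:R * trunc_conv N j :> rat.
Proof.
move=> hj; have := conv_partial_sums N j N hj (leqnn N).
rewrite sumrB.
under eq_bigr => r _ do rewrite -mulrA.
under [X in _ - X = _]eq_bigr => r _ do rewrite -mulrA.
rewrite -!mulr_sumr -/(trunc_conv N j) -(vandermonde_split N j).
move: (trunc_conv N j) (tail_conv N j) (\sum_(0 <= r < N.+1) _)
  ('C(2*N + 1, N))%:R ('C(2*N + j, N))%:R => t1 t2 t3 x y e.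
by apply: (eq_lincomb 1 e); field_nat.
Qed.

Lemma Psi_bottom N j : (1 <= j)%N ->
  Psi N j N = - (N`!)%:R ^+ 2 * ((N + j - 1)`!)%:R
                / (2 * ((2*N + j)`!)%:R * ((2*N + 1)`!)%:R).
Proof.
move=> hj; rewrite /Psi rpoly_bottom.
rewrite (natr_bin_fact (_ : (N.+1 <= 2*N + j)%N)); last lia.
rewrite (natr_bin_fact (_ : (2*N + 2 <= N.+1 + (2*N + j))%N)); last lia.
rewrite (_ : (2*N + j - N.+1 = N + j - 1)%N); last lia.
rewrite (_ : (N.+1 + (2*N + j) - (2*N + 2) = N + j - 1)%N); last lia.
rewrite (_ : (N.+1 + (2*N + j) = N + j + 2*N + 1)%N); last lia.
rewrite (_ : (2*N + 2 = (2*N + 1).+1)%N); last lia.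
rewrite !natr_factS.
have := natr_fact_neq0 N; have := natr_fact_neq0 (2*N + j); have := natr_fact_neq0 (N + j - 1);
have := natr_fact_neq0 (2*N + 1); have := natr_fact_neq0 (N + j + 2*N + 1).
move: (N`!)%:R ((2*N + j)`!)%:R ((N + j - 1)`!)%:R ((2*N + 1)`!)%:R ((N + j + 2*N + 1)`!)%:R
  => a b c d e he hd hc hb ha; field_nat.
Qed.

(* The sum over h in closed form: Psi(2N+2) - Psi(N), where the Psi(N) part
   cancels against the Vandermonde part of Psi(2N+2). *)
Lemma rhs_sum_closed N j : (1 <= j)%N ->
  \sum_(N <= h < (2*N + 1).+1)
     ((h + j - 1)`!)%:R * ((h.+1)`!)%:R / (((h - N)`!)%:R * ((2*N + j + h + 2)`!)%:R)
  = ((2*N + j + 1)`!)%:R / (2 * ((4*N + j + 3)`!)%:R)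
    * ((4*N + j + 3)%:R * (N`!)%:R ^+ 2 * ((N + j - 1)`!)%:R / ((2*N + j)`!)%:R
         * trunc_conv N j
       - (j%:R - (2*N + 3)%:R) * ((2*N + 1)`!)%:R / ((N + j)%:R * ((N.+1)`!)%:R)).
Proof.
move=> hj; rewrite h_sum_telescopes // Psi_bottom // /Psi rpoly_top.
have -> : tail_conv N j = ((2*N + 2)%:R * tail_conv N j) / (2*N + 2)%:R by field_nat.
rewrite tail_conv_closed //.
rewrite (natr_bin_fact (_ : (N.+1 <= 2*N + j)%N)); last lia.
rewrite (natr_bin_fact (_ : (N <= 2*N + j)%N)); last lia.
rewrite (natr_bin_fact (_ : (N <= 2*N + 1)%N)); last lia.
rewrite (natr_bin_fact (_ : (2*N + 2 <= 2*N + 3 + (2*N + j))%N)); last lia.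
rewrite (_ : (2*N + j - N.+1 = N + j - 1)%N); last lia.
rewrite (_ : (2*N + j - N = (N + j - 1).+1)%N); last lia.
rewrite (_ : (2*N + 1 - N = N.+1)%N); last lia.
rewrite (_ : (2*N + 3 + (2*N + j) - (2*N + 2) = 2*N + j + 1)%N); last lia.
rewrite (_ : (2*N + 3 + (2*N + j) = 4*N + j + 3)%N); last lia.
rewrite (_ : (2*N + 2 + j - 1 = 2*N + j + 1)%N); last lia.
rewrite (_ : (2*N + 2 + j + 2*N + 1 = 4*N + j + 3)%N); last lia.
rewrite (_ : (2*N + 2 = (2*N + 1).+1)%N); last lia.
rewrite (_ : (2*N + j + 1 = (2*N + j).+1)%N); last lia.
rewrite !natr_factS (_ : (N + j - 1).+1 = N + j)%N; last lia.
have := natr_fact_neq0 N; have := natr_fact_neq0 (2*N + j); have := natr_fact_neq0 (N + j - 1);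
have := natr_fact_neq0 (2*N + 1); have := natr_fact_neq0 (4*N + j + 3).
move: (N`!)%:R ((2*N + j)`!)%:R ((N + j - 1)`!)%:R ((2*N + 1)`!)%:R ((4*N + j + 3)`!)%:R
  (trunc_conv N j) => a b c d e t he hd hc hb ha; field_nat.
Qed.

Theorem mainTheorem13 (N j : nat) (hj : (1 <= j)%N) :
  (-1) ^+ j.+1 * E N j / (((2*N + j)`!)%:R : rat) =
    (j - 1)%:R * ((2*N + 1)`!)%:R / ((4*N + j + 3)`!)%:R *
      (2 * ((2*N + 1)`!)%:R / ((N`!)%:R * ((N.+1)`!)%:R) - 2 ^+ (2*N + 2))
  - ((2*N + 2)`!)%:R / ((4*N + j + 3)`!)%:R *
      (4 * ((2*N + 1)`!)%:R / ((N`!)%:R * ((N.+1)`!)%:R) + 2 ^+ (2*N + 3))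
  - (j - 1)%:R * ((N + j - 1)`!)%:R * (N`!)%:R
      / (((2*N + j)`!)%:R * ((2*N + j + 1)`!)%:R)
  + 2 * (j - 1)%:R * ((2*N + 2)`!)%:R / (((2*N + j + 1)`!)%:R * ((N.+1)`!)%:R) *
      \sum_(N <= h < (2*N + 1).+1)
        ((h + j - 1)`!)%:R * ((h.+1)`!)%:R / (((h - N)`!)%:R * ((2*N + j + h + 2)`!)%:R).
Proof.
rewrite E_reduced // Phi_top // rhs_sum_closed // natrB //.
rewrite (_ : (4*N + j + 3 = (4*N + j + 2).+1)%N); last lia.
rewrite (_ : (2*N + 2 = (2*N + 1).+1)%N); last lia.
rewrite (_ : (2*N + 3 = (2*N + 1).+2)%N); last lia.
rewrite (_ : (2*N + j + 1 = (2*N + j).+1)%N); last lia.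
rewrite !natr_factS !exprS.
have := natr_fact_neq0 N; have := natr_fact_neq0 (2*N + j); have := natr_fact_neq0 (N + j - 1);
have := natr_fact_neq0 (2*N + 1); have := natr_fact_neq0 (4*N + j + 2).
move: (N`!)%:R ((2*N + j)`!)%:R ((N + j - 1)`!)%:R ((2*N + 1)`!)%:R ((4*N + j + 2)`!)%:R
  (trunc_conv N j) (2 ^+ (2*N + 1) : rat) => a b c d e t p he hd hc hb ha; field_nat.
Qed.
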